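(* For any $h,v$ with $hv\ge n^2$, there is an $[h,v]$-scheme for \textsc{TriangleCount-Adj} on $n$-vertex graphs.
   Context: Annotated streaming model (schemes): a space-bounded Verifier reads an input stream $\sigma$; after the stream ends, an all-powerful Prover sends a help message to the Verifier as a stream. A scheme for a function $f$ consists of the Verifier's randomized streaming algorithm, the honest Prover's help function, and the Verifier's output procedure, outputting a value in $\mathrm{range}(f)\cup\{\bot\}$ ($\bot$ = reject), with perfect completeness (honest help makes the Verifier output $f(\sigma)$ with probability 1) and soundness error at most $1/3$ (for every $\sigma$ and every help message, the probability of outputting a value outside $\{f(\sigma),\bot\}$ is at most $1/3$). An $[h,v]$-scheme uses $\tilde{O}(h)$ bits of help and $\tilde{O}(v)$ bits of Verifier space, where $\tilde{O}$ hides factors polynomial in $\log n$. \textsc{TriangleCount-Adj}: the input is a graph on vertex set $[n]$ given in the adjacency-list (vertex-arrival) streaming model, where for each vertex $v$ the stream presents its full neighbor list $N(v)$ contiguously (vertices appear in some order, each with its neighbor list). The desired output is the number of triangles in the graph. *)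

From mathcomp Require Import all_boot.
Set Implicit Arguments. Unset Strict Implicit. Unset Printing Implicit Defensive.

Definition simple_graph (n : nat) (g : rel 'I_n) : Prop :=
  (forall x y, g x y = g y x) /\ (forall x, g x x = false).

Definition triangle_count (n : nat) (g : rel 'I_n) : nat :=
  #|[set t : {set 'I_n} | (#|t| == 3) &&
       [forall x in t, forall y in t, (x != y) ==> g x y]]|.

(* A stream token (u, w) means "w is in the neighbour list N(u)" (O(log n) bits). *)
Definition token (n : nat) := ('I_n * 'I_n)%type.

Definition adj_stream (n : nat) (g : rel 'I_n) (sigma : seq (token n)) : Prop :=
  exists blocks : seq ('I_n * seq 'I_n),
    [/\ perm_eq (map fst blocks) (enum 'I_n),
        (forall b, b \in blocks -> uniq b.2 /\ (forall w, (w \in b.2) = g b.1 w))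
      & sigma = flatten [seq [seq (b.1, w) | w <- b.2] | b <- blocks]].

(* A randomized streaming verifier with memory of vbits bits: its memory states
   are 'I_(2^vbits).  It tosses vbits random coins (seed r, uniform), stores
   them in memory (initial state vinit r), processes the input stream with
   vstep, then the help stream (bits) with vhelp, and outputs vout
   (None = reject, i.e. bottom). *)
Record verifier (n : nat) := Verifier {
  vbits : nat;
  vinit : 'I_(2 ^ vbits) -> 'I_(2 ^ vbits);
  vstep : 'I_(2 ^ vbits) -> token n -> 'I_(2 ^ vbits);
  vhelp : 'I_(2 ^ vbits) -> bool -> 'I_(2 ^ vbits);
  vout  : 'I_(2 ^ vbits) -> option nat }.
Arguments vbits {n} v.
Arguments vinit {n} v _.
Arguments vstep {n} v _ _.
Arguments vhelp {n} v _ _.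
Arguments vout {n} v _.

Definition run (n : nat) (V : verifier n) (r : 'I_(2 ^ vbits V))
    (sigma : seq (token n)) (help : seq bool) : option nat :=
  vout V (foldl (vhelp V) (foldl (vstep V) (vinit V r) sigma) help).

Arguments run {n} V r sigma help.

(* Scheme for TriangleCount-Adj on n-vertex graphs with honest prover P:
   perfect completeness and soundness error at most 1/3. *)
Definition tc_scheme (n : nat) (V : verifier n)
    (P : seq (token n) -> seq bool) : Prop :=
  (forall g sigma, simple_graph g -> adj_stream g sigma ->
     forall r, run V r sigma (P sigma) = Some (triangle_count g))
  /\
  (forall g sigma, simple_graph g -> adj_stream g sigma ->
     forall help : seq bool,
       3 * #|[set r : 'I_(2 ^ vbits V) |
               (run V r sigma help != None) &&
               (run V r sigma help != Some (triangle_count g))]|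
       <= 2 ^ vbits V).

(* log factor used for O~ : floor(log2 n) + 1 (>= 1). *)
Definition logf (n : nat) : nat := (trunc_log 2 n).+1.

From HB Require Import structures.
From mathcomp Require Import all_boot all_algebra zify.
From Stdlib Require Import FunctionalExtensionality.
Set Implicit Arguments. Unset Strict Implicit. Unset Printing Implicit Defensive.
Import GRing.Theory.

(* Split the vertices by residue mod a and mod b, with a b <= v, and encode a pair (w, x) by
   e(w, x) = (w div a) (n div b + 1) + (x div b) < H = (n div a + 1) (n div b + 1) = O(h);
   together with the residues (w mod a, x mod b) this determines (w, x).  For each residue
   pair j let W_j(X) = sum_z sum_(w, x in N(z) with residues j) X^e(w, x) count wedges and
   E_j(X) = sum_(uw edge with residues j) X^(H - 1 - e(u, w)).  Then the coefficient of
   X^(H - 1) in P = sum_j E_j W_j counts the pairs (ordered edge uw, common neighbour z),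
   i.e. six times the number of triangles.
   The verifier draws r in F_p and maintains the a b values E_j(r), W_j(r) while the lists
   stream by: each list N(z) contributes to W_j(r) the product of two sums over N(z), which
   fits in a + b further field elements.  The prover sends the 2H coefficients of P, which the
   verifier evaluates at r by Horner's rule and checks against sum_j E_j(r) W_j(r), keeping the
   coefficient of X^(H - 1).  A wrong polynomial agrees with P at fewer than 2H points, so a
   prime p > 12 (n + 1)^3 makes the error below 1/3 and keeps 6 T exact mod p; such a p with
   O(log n) bits exists by Chebyshev's bound 2^M <= C(2M, M) <= (2M)^pi(2M). *)

Lemma logn_fact_wide p n K : prime p -> n <= K ->
  logn p n`! = \sum_(1 <= k < K.+1) n %/ p ^ k.
Proof.
move=> p_pr le_nK; rewrite logn_fact // (@big_cat_nat _ _ _ n.+1 1 K.+1) //=.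
rewrite [X in _ + X]big1_seq ?addn0 // => k /andP[_]; rewrite mem_index_iota.
case/andP=> lt_nk _; apply/divn_small/(leq_trans lt_nk)/ltnW/ltn_expl.
exact: prime_gt1.
Qed.

Lemma sum_nat_leq t K : \sum_(1 <= k < K.+1) (k <= t) = minn K t.
Proof.
elim: K => [|K IH]; first by rewrite big_nil; lia.
by rewrite big_nat_recr //= IH; case: (leqP K.+1 t); lia.
Qed.

Lemma p_part_central_bin q M : prime q -> 0 < M -> 'C(M.*2, M)`_q <= M.*2.
Proof.
move=> q_pr M_gt0; have q_gt1 := prime_gt1 q_pr.
rewrite p_part -addnn.
have facts := bin_fact (leq_addl M M); rewrite addnK in facts.
set t := trunc_log q (M + M).
have le_qt : q ^ t <= M + M by apply: trunc_logP => //; lia.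
have lt_qt : M + M < q ^ t.+1 by apply: trunc_log_ltn.
suff le_t : logn q 'C(M + M, M) <= t.
  by apply: leq_trans le_qt; rewrite leq_exp2l.
have E := congr1 (logn q) facts.
rewrite !lognM ?muln_gt0 ?fact_gt0 ?bin_gt0 ?leq_addl // in E.
rewrite !(@logn_fact_wide q _ (M + M)) // in E; last by lia.
(* Legendre: each term of [v_q((2M)!) - 2 v_q(M!)] is 0 or 1, and 0 once [q^k > 2M]. *)
have termwise : \sum_(1 <= k < (M + M).+1) (M + M) %/ q ^ k <=
    \sum_(1 <= k < (M + M).+1) (M %/ q ^ k + M %/ q ^ k + (k <= t)).
  apply: leq_sum => k _; case: (leqP k t) => le_kt.
    have : 0 < q ^ k by rewrite expn_gt0; lia.
    move: (q ^ k) => d d_gt0; rewrite addn1.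
    have := divn_eq M d; have := ltn_pmod M d_gt0.
    have := divn_eq (M + M) d; have := ltn_pmod (M + M) d_gt0.
    nia.
  by rewrite divn_small //; apply: leq_trans lt_qt _; rewrite leq_exp2l.
rewrite !big_split /= sum_nat_leq -E in termwise; lia.
Qed.

Lemma exp2_le_central_bin M : 2 ^ M <= 'C(M.*2, M).
Proof.
elim: M => [|M IH] //; rewrite doubleS binS expnS.
have : 'C(M.*2, M) <= 'C(M.*2.+1, M.+1) by rewrite binS; lia.
have : 'C(M.*2, M) <= 'C(M.*2.+1, M) by case: M {IH} => [|m] //; rewrite binS; lia.
lia.
Qed.

Lemma leq_prod_if_leq N X K : 0 < X ->
  \prod_(0 <= q < K) (if q <= N then X else 1) <= X ^ N.+1.
Proof.
move=> X_gt0.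
have -> : \prod_(0 <= q < K) (if q <= N then X else 1) = X ^ minn K N.+1.
  elim: K => [|K IH]; first by rewrite big_nil.
  rewrite big_nat_recr //= IH; case: (leqP K N) => le_KN.
    by rewrite -expnSr; congr (_ ^ _); lia.
  by rewrite muln1; congr (_ ^ _); lia.
by apply: leq_pexp2l; lia.
Qed.

Lemma central_bin_no_large_prime N M : 0 < M ->
    (forall q, prime q -> N < q -> M.*2 < q) -> 'C(M.*2, M) <= M.*2 ^ N.+1.
Proof.
move=> M_gt0 no_prime.
have C_gt0 : 0 < 'C(M.*2, M) by rewrite bin_gt0 -addnn leq_addl.
rewrite -{1}(partnT C_gt0) /partn.
apply: leq_trans (@leq_prod_if_leq N _ _ _) => //; last by lia.
apply: leq_prod => q _; rewrite -p_part.
case: (posnP (logn q 'C(M.*2, M))) => [v0 | v_gt0].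
  by rewrite p_part v0; case: ifP; lia.
have q_pr : prime q by move: v_gt0; rewrite logn_gt0 mem_primes => /andP[].
have le_part := p_part_central_bin q_pr M_gt0.
case: ifP => // /negbT; rewrite -ltnNge => /(no_prime q q_pr); rewrite ltnNge.
case/negP; apply: leq_trans le_part; rewrite p_part -{1}(expn1 q).
by rewrite leq_pexp2l // prime_gt0.
Qed.

Lemma ltn_exp2_cube s : 2 <= s -> (3 * s + 1) * (2 ^ s + 1) < 2 ^ (3 * s).
Proof.
elim: s => [|s IH] // le2s; case: (ltnP s 2) => [lt_s2 | /IH].
  by have -> : s = 1 by lia.
have -> : 3 * s.+1 = (3 * s).+3 by lia.
rewrite !expnS; move: (2 ^ s) (2 ^ (3 * s)); lia.
Qed.

(* Chebyshev's argument: otherwise [2^M <= 'C(2M, M) <= (2M)^(N+1)] with [N = 2^s], [M = N^3]. *)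
Lemma prime_between_exp2 s : 2 <= s ->
  exists2 p, prime p & 2 ^ s < p <= 2 ^ (3 * s).+1.
Proof.
move=> le2s; set N := 2 ^ s; set M := 2 ^ (3 * s).
have M_gt0 : 0 < M by rewrite expn_gt0.
have M2 : 2 ^ (3 * s).+1 = M.*2 by rewrite expnS; lia.
rewrite M2; case: (boolP (has (fun p => prime p && (N < p <= M.*2)) (iota 0 M.*2.+1))).
  by case/hasP=> p _ /andP[]; exists p.
move/hasPn=> none; exfalso.
have no_prime q : prime q -> N < q -> M.*2 < q.
  move=> q_pr lt_Nq; rewrite ltnNge; apply/negP => le_qM.
  by have := none q; rewrite mem_iota ltnS le_qM q_pr lt_Nq => /(_ isT).
have := leq_trans (exp2_le_central_bin M) (central_bin_no_large_prime M_gt0 no_prime).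
rewrite -M2 -expnM leq_exp2l // => le_exp.
by have := ltn_exp2_cube le2s; rewrite -/N -/M; lia.
Qed.

Lemma sum_nat_card (T : finType) (A : pred T) : \sum_(z : T) (z \in A : nat) = #|A|.
Proof. by rewrite -sum1_card [RHS]big_mkcond; apply: eq_bigr => z _; case: (z \in A). Qed.

Lemma cards3 (T : finType) (u w z : T) : u != w -> u != z -> w != z ->
  #|[set u; w; z]| = 3.
Proof.
move=> uw uz wz; rewrite setUC cardsU1 cards2 uw !inE negb_or.
by rewrite (eq_sym z u) uz (eq_sym z w) wz.
Qed.

Section Triangles.
Variables (n : nat) (g : rel 'I_n).
Hypothesis g_simple : simple_graph g.

Definition is_triangle (t : {set 'I_n}) : bool :=
  (#|t| == 3) && [forall x in t, forall y in t, (x != y) ==> g x y].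

Definition triangleb (u w z : 'I_n) : bool := g u w && g z u && g z w.

Lemma adj_neq x y : g x y -> x != y.
Proof. by case: g_simple => _ irr gxy; apply: contraTneq gxy => ->; rewrite irr. Qed.

Lemma triangleb_set u w z : triangleb u w z -> is_triangle [set u; w; z].
Proof.
case: g_simple => sym _ /andP[/andP[guw gzu] gzw].
rewrite /is_triangle cards3 ?eqxx; last 3 first.
- exact: adj_neq.
- by rewrite eq_sym adj_neq.
- by rewrite eq_sym adj_neq.
apply/'forall_implyP => x; rewrite !inE => x_in; apply/'forall_implyP => y.
rewrite !inE => y_in; apply/implyP.
by case/orP: x_in => [/orP[]|] /eqP->; case/orP: y_in => [/orP[]|] /eqP->;
  rewrite ?eqxx // => _; rewrite ?guw ?gzu ?gzw // sym ?guw ?gzu ?gzw.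
Qed.

Lemma triangleb_setE t u w z : is_triangle t ->
  (triangleb u w z && ([set u; w; z] == t)) = [&& u \in t, w \in t :\ u & z \in t :\ u :\ w].
Proof.
case/andP=> /eqP card_t /forallP adj_t.
apply/idP/idP.
  case/andP=> /andP[/andP[guw gzu] gzw] /eqP <-.
  rewrite !inE !eqxx /= !orbT /= andbT eq_sym (adj_neq gzu) eq_sym (adj_neq gzw).
  by rewrite eq_sym (adj_neq guw).
case/and3P=> ut; rewrite !inE => /andP[wu wt] /and3P[zw zu zt].
have -> : [set u; w; z] = t.
  apply/eqP; rewrite eqEcard card_t cards3 1?eq_sym // leqnn andbT.
  by apply/subsetP => x; rewrite !inE => /orP[/orP[]|] /eqP->.
have adj x y : x \in t -> y \in t -> x != y -> g x y.
  by move=> xt yt xy; have /'forall_implyP/(_ y) := implyP (adj_t x) xt; rewrite yt xy; apply.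
by rewrite eqxx andbT /triangleb !adj // eq_sym.
Qed.

Lemma sum_triangleb_set t : is_triangle t ->
  \sum_u \sum_w \sum_z (triangleb u w z && ([set u; w; z] == t) : nat) = 6.
Proof.
move=> tri_t; have /andP[/eqP card_t _] := tri_t.
under eq_bigr => u _ do under eq_bigr => w _ do under eq_bigr => z _
  do rewrite triangleb_setE //.
have sum_z u w : \sum_z ([&& u \in t, w \in t :\ u & z \in t :\ u :\ w] : nat) =
    (u \in t) * (w \in t :\ u) * #|t :\ u :\ w|.
  rewrite -(sum_nat_card (mem (t :\ u :\ w))) big_distrr; apply: eq_bigr => z _.
  by case: (u \in t); case: (w \in t :\ u); rewrite /= ?mul0n ?mul1n.
have sum_w u : \sum_w ((u \in t) * (w \in t :\ u) * #|t :\ u :\ w|) = (u \in t) * 2.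
  case: (boolP (u \in t)) => ut; last by rewrite big1 //; lia.
  have card_tu : #|t :\ u| = 2 by have := cardsD1 u t; rewrite ut card_t; lia.
  rewrite mul1n -card_tu -sum_nat_card; apply: eq_bigr => w _.
  case: (boolP (w \in t :\ u)) => wt //=.
  by rewrite !mul1n; have := cardsD1 w (t :\ u); rewrite wt card_tu add1n => -[<-].
under eq_bigr => u _ do under eq_bigr => w _ do rewrite sum_z.
under eq_bigr => u _ do rewrite sum_w.
by rewrite -big_distrl /= sum_nat_card card_t.
Qed.

Lemma sum_triangleb : \sum_u \sum_w \sum_z (triangleb u w z : nat) = 6 * triangle_count g.
Proof.
have split u w z : (triangleb u w z : nat) =
    \sum_(t | is_triangle t) (triangleb u w z && ([set u; w; z] == t) : nat).
  case: (boolP (triangleb u w z)) => tri /=; last by rewrite big1.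
  rewrite (bigD1 [set u; w; z]) ?triangleb_set //= eqxx big1 // => t /andP[_].
  by rewrite eq_sym => /negbTE ->.
under eq_bigr => u _ do under eq_bigr => w _ do under eq_bigr => z _ do rewrite split.
under eq_bigr => u _ do under eq_bigr => w _ do rewrite exchange_big.
under eq_bigr => u _ do rewrite exchange_big.
rewrite exchange_big /= (eq_bigr (fun _ => 6)); last exact: sum_triangleb_set.
by rewrite sum_nat_const mulnC /triangle_count cardsE.
Qed.

Lemma triangle_count_le : 6 * triangle_count g <= n ^ 3.
Proof.
rewrite -sum_triangleb.
apply: leq_trans (_ : \sum_(u : 'I_n) \sum_(w : 'I_n) \sum_(z : 'I_n) 1 <= _).
  by do 3![apply: leq_sum => ? _]; case: triangleb.
by rewrite !big_const_ord !iter_addn_0 mul1n; lia.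
Qed.

End Triangles.

Section StateMachineVerifier.
Variables (n : nat) (S : finType) (bits : nat) (s0 : S) (card_S : #|S| <= 2 ^ bits).
Variables (start : 'I_(2 ^ bits) -> S) (step : S -> token n -> S).
Variables (help_step : S -> bool -> S) (output : S -> option nat).

Definition encode_state (s : S) : 'I_(2 ^ bits) := widen_ord card_S (enum_rank s).
Definition decode_state (x : 'I_(2 ^ bits)) : S := nth s0 (enum S) x.

Lemma encode_stateK : cancel encode_state decode_state.
Proof. by move=> s; rewrite /decode_state /= nth_enum_rank. Qed.

Definition state_verifier : verifier n :=
  @Verifier n bits (fun r => encode_state (start r))
    (fun x t => encode_state (step (decode_state x) t))
    (fun x bt => encode_state (help_step (decode_state x) bt))
    (fun x => output (decode_state x)).

Lemma foldl_encode_state (A : Type) (f : S -> A -> S) s xs :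
  foldl (fun x a => encode_state (f (decode_state x) a)) (encode_state s) xs =
  encode_state (foldl f s xs).
Proof. by elim: xs s => //= a xs IH s; rewrite encode_stateK IH. Qed.

Lemma run_state_verifier r sigma help :
  run state_verifier r sigma help =
  output (foldl help_step (foldl step (start r) sigma) help).
Proof. by rewrite /run /= !foldl_encode_state encode_stateK. Qed.

End StateMachineVerifier.

Lemma card_seeds_mod p K (B : {set 'F_p}) : prime p ->
  #|[set s : 'I_K | (s%:R : 'F_p)%R \in B]| <= #|B| * (K %/ p + 1).
Proof.
move=> p_pr.
pose f (s : 'I_K) := ((s%:R : 'F_p)%R, (inord (s %/ p) : 'I_(K %/ p).+1)).
have f_inj : injective f.
  move=> x y [eq_mod /(congr1 val)].
  rewrite /= !inordK ?ltnS ?leq_div2r 1?ltnW // => eq_div.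
  have : x %% p = y %% p by rewrite -!val_Fp_nat // eq_mod.
  by move=> eq_mod'; apply: val_inj; rewrite /= (divn_eq x p) (divn_eq y p) eq_div eq_mod'.
rewrite -(card_imset _ f_inj).
apply: leq_trans (subset_leq_card (_ : _ \subset setX B [set: 'I_(K %/ p).+1])) _.
  by apply/subsetP => _ /imsetP[s + ->]; rewrite !inE andbT.
by rewrite cardsX cardsT card_ord addn1.
Qed.

Local Open Scope ring_scope.

Fixpoint bits_be (k m : nat) : seq bool :=
  if k is k'.+1 then rcons (bits_be k' m./2) (odd m) else [::].

Definition bits_val (R : pzSemiRingType) (bs : seq bool) : R :=
  foldl (fun x (bt : bool) => x * 2%:R + (bt : nat)%:R) 0 bs.

Lemma size_bits_be k m : size (bits_be k m) = k.
Proof. by elim: k m => //= k IH m; rewrite size_rcons IH. Qed.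

Lemma bits_val_be (R : pzSemiRingType) k m : (m < 2 ^ k)%N -> bits_val R (bits_be k m) = m%:R.
Proof.
elim: k m => [|k IH] m /=; first by rewrite expn0 ltnS leqn0 => /eqP->.
rewrite expnS => lt_m; rewrite /bits_val foldl_rcons -/(bits_val R _) IH; last first.
  by rewrite -divn2; lia.
by rewrite -natrM -natrD muln2 addnC odd_double_half.
Qed.

Section TriangleScheme.
Variables (n a' b' p L' : nat).
Local Notation a := a'.+1.
Local Notation b := b'.+1.
Local Notation L := L'.+1.
Local Notation F := 'F_p.

Definition nquo_b : nat := (n %/ b + 1)%N.
Definition span : nat := ((n %/ a + 1) * nquo_b)%N.
Definition ncoefs : nat := (2 * span)%N.

Lemma span_gt0 : (0 < span)%N.
Proof. by rewrite /span /nquo_b muln_gt0 !addn1. Qed.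

Lemma span_le_sq : (span <= n.+1 ^ 2)%N.
Proof. by rewrite /span /nquo_b !addn1 leq_mul // ltnS leq_div. Qed.

Definition res_a (w : 'I_n) : 'I_a := inord (w %% a).
Definition res_b (x : 'I_n) : 'I_b := inord (x %% b).
Definition pair_exp (w x : 'I_n) : nat := (w %/ a * nquo_b + x %/ b)%N.
Definition edge_exp (u w : 'I_n) : nat := (span.-1 - pair_exp u w)%N.

Definition monoX (c : bool) (m : nat) : {poly F} := if c then 'X^m else 0.
Definition mono_a (w : 'I_n) (i : 'I_a) := monoX (res_a w == i) (w %/ a * nquo_b).
Definition mono_b (x : 'I_n) (i : 'I_b) := monoX (res_b x == i) (x %/ b).
Definition mono_edge (u w : 'I_n) (j : 'I_a * 'I_b) :=
  monoX (j == (res_a u, res_b w)) (edge_exp u w).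

Definition edge_poly (g : rel 'I_n) j := \sum_u \sum_w (if g u w then mono_edge u w j else 0).
Definition nbr_poly_a (g : rel 'I_n) z i := \sum_w (if g z w then mono_a w i else 0).
Definition nbr_poly_b (g : rel 'I_n) z i := \sum_x (if g z x then mono_b x i else 0).
Definition wedge_poly (g : rel 'I_n) j := \sum_z nbr_poly_a g z j.1 * nbr_poly_b g z j.2.
Definition tri_poly (g : rel 'I_n) := \sum_j edge_poly g j * wedge_poly g j.

Lemma coef_monoX c m k : (monoX c m)`_k = if c && (m == k) then 1 else 0.
Proof. by case: c; rewrite /monoX ?coef0 //= coefXn eq_sym; case: (m == k). Qed.

Lemma monoXM c1 c2 m1 m2 : monoX c1 m1 * monoX c2 m2 = monoX (c1 && c2) (m1 + m2).
Proof. by case: c1; case: c2; rewrite /monoX ?mul0r ?mulr0 // exprD. Qed.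

Lemma if_monoX c c' m : (if c then monoX c' m else 0) = monoX (c && c') m.
Proof. by case: c. Qed.

Lemma pair_exp_lt w x : (pair_exp w x < span)%N.
Proof.
have : (w %/ a <= n %/ a)%N by apply/leq_div2r/ltnW.
have : (x %/ b <= n %/ b)%N by apply/leq_div2r/ltnW.
rewrite /pair_exp /span /nquo_b; nia.
Qed.

Lemma pair_exp_inj u w w' x' : res_a w' = res_a u -> res_b x' = res_b w ->
  pair_exp w' x' = pair_exp u w -> w' = u /\ x' = w.
Proof.
move=> /(congr1 val) eq_a /(congr1 val) eq_b eq_exp.
rewrite /= !inordK ?ltn_pmod // in eq_a eq_b.
have lt_quo (y : 'I_n) : (y %/ b < nquo_b)%N by rewrite /nquo_b addn1 ltnS leq_div2r // ltnW.
have := congr1 (edivn^~ nquo_b) eq_exp; rewrite /pair_exp !edivn_eq // => -[eq_qa eq_qb].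
split; apply: val_inj => /=.
  by rewrite (divn_eq w' a) (divn_eq u a) eq_qa eq_a.
by rewrite (divn_eq x' b) (divn_eq w b) eq_qb eq_b.
Qed.

Lemma tri_polyE g : tri_poly g =
  \sum_u \sum_w (if g u w then 'X^(edge_exp u w) * wedge_poly g (res_a u, res_b w) else 0).
Proof.
rewrite /tri_poly /edge_poly; under eq_bigr => j _ do rewrite mulr_suml.
rewrite exchange_big; apply: eq_bigr => u _; under eq_bigr => j _ do rewrite mulr_suml.
rewrite exchange_big; apply: eq_bigr => w _.
rewrite (bigD1 (res_a u, res_b w)) //= big1 => [|j /negbTE j_neq].
  by rewrite addr0 /mono_edge /monoX eqxx; case: (g u w); rewrite ?mul0r.
by rewrite /mono_edge /monoX j_neq; case: (g u w); rewrite mul0r.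
Qed.

Lemma coef_wedge_poly g j t : (wedge_poly g j)`_t = \sum_z \sum_w \sum_x
  (if [&& g z w && (res_a w == j.1), g z x && (res_b x == j.2) & pair_exp w x == t]
   then 1 else 0).
Proof.
rewrite /wedge_poly coef_sum; apply: eq_bigr => z _.
rewrite /nbr_poly_a /nbr_poly_b big_distrlr coef_sum; apply: eq_bigr => w _.
rewrite coef_sum; apply: eq_bigr => x _.
rewrite /mono_a /mono_b /= !if_monoX monoXM coef_monoX /pair_exp !(eq_sym _ j.1) !(eq_sym _ j.2).
by case: (g z w && _); case: (g z x && _).
Qed.

Lemma coef_wedge_poly_pair g u w :
  (wedge_poly g (res_a u, res_b w))`_(pair_exp u w) = (\sum_z (g z u && g z w : nat))%:R.
Proof.
rewrite coef_wedge_poly natr_sum; apply: eq_bigr => z _.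
rewrite (bigD1 u) //= [X in _ + X]big1 => [|w' /negbTE w'_neq]; last first.
  rewrite big1 // => x _; case: and3P => // -[/andP[_ /eqP eq_a] /andP[_ /eqP eq_b] /eqP eq_exp].
  by have [w'_eq _] := pair_exp_inj eq_a eq_b eq_exp; rewrite w'_eq eqxx in w'_neq.
rewrite addr0 (bigD1 w) //= [X in _ + X]big1 => [|x' /negbTE x'_neq]; last first.
  case: and3P => // -[/andP[_ /eqP eq_a] /andP[_ /eqP eq_b] /eqP eq_exp].
  by have [_ x'_eq] := pair_exp_inj eq_a eq_b eq_exp; rewrite x'_eq eqxx in x'_neq.
by rewrite !eqxx !andbT addr0; case: (g z u); case: (g z w).
Qed.

Lemma coef_tri_poly_high g k : (ncoefs <= k)%N -> (tri_poly g)`_k = 0.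
Proof.
move=> le_k; rewrite tri_polyE coef_sum big1 // => u _; rewrite coef_sum big1 // => w _.
case: (g u w); last by rewrite coef0.
rewrite coefXnM; case: ifP => // _.
rewrite coef_wedge_poly big1 // => z _; rewrite big1 // => w' _; rewrite big1 // => x' _.
have := pair_exp_lt w' x'; have := pair_exp_lt u w.
by move: le_k; rewrite /edge_exp /ncoefs => ? ? ?; rewrite ifN //; apply/and3P => -[_ _ /eqP]; lia.
Qed.

Lemma size_tri_poly g : (size (tri_poly g) <= ncoefs)%N.
Proof. by apply/leq_sizeP => k; apply: coef_tri_poly_high. Qed.

Lemma coef_tri_poly_mid g :
  (tri_poly g)`_span.-1 = (\sum_u \sum_w \sum_z (triangleb g u w z : nat))%:R.
Proof.
rewrite tri_polyE coef_sum natr_sum; apply: eq_bigr => u _.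
rewrite coef_sum natr_sum; apply: eq_bigr => w _.
case: (boolP (g u w)) => guw; last by rewrite coef0 big1 // => z _; rewrite /triangleb (negbTE guw).
have := pair_exp_lt u w; rewrite coefXnM ltnNge /edge_exp => lt_span.
rewrite ifF; last by apply/negbTE; lia.
have -> : (span.-1 - (span.-1 - pair_exp u w) = pair_exp u w)%N by lia.
by rewrite coef_wedge_poly_pair; congr _%:R; apply: eq_bigr => z _; rewrite /triangleb guw.
Qed.

Lemma tri_poly_mid_div6 g : prime p -> simple_graph g -> (6 * triangle_count g < p)%N ->
  (nat_of_ord ((tri_poly g)`_span.-1)%R %/ 6)%N = triangle_count g.
Proof.
move=> p_pr g_simple lt_p.
by rewrite coef_tri_poly_mid sum_triangleb // val_Fp_nat // modn_small // mulKn.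
Qed.

Record state := State {
  point : F; current : option 'I_n;
  nbr_a : {ffun 'I_a -> F}; nbr_b : {ffun 'I_b -> F};
  edge_val : {ffun 'I_a * 'I_b -> F}; wedge_val : {ffun 'I_a * 'I_b -> F};
  chunk : F; chunk_len : 'I_L; ncoef : 'I_ncoefs.+2; horner_acc : F; mid_coef : F }.

Definition state_tuple (s : state) :=
  (point s, current s, nbr_a s, nbr_b s, edge_val s, wedge_val s,
   chunk s, chunk_len s, ncoef s, horner_acc s, mid_coef s).
Definition tuple_state t : state :=
  let: (x1, x2, x3, x4, x5, x6, x7, x8, x9, x10, x11) := t in
  State x1 x2 x3 x4 x5 x6 x7 x8 x9 x10 x11.
Lemma state_tupleK : cancel state_tuple tuple_state. Proof. by case. Qed.
HB.instance Definition _ := Equality.copy state (can_type state_tupleK).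
HB.instance Definition _ := Choice.copy state (can_type state_tupleK).
HB.instance Definition _ := Countable.copy state (can_type state_tupleK).
HB.instance Definition _ := Finite.copy state (can_type state_tupleK).

Lemma card_state :
  (#|{: state}| <= #|F| * n.+1 * #|F| ^ a * #|F| ^ b * #|F| ^ (a * b) * #|F| ^ (a * b)
                   * #|F| * L * ncoefs.+2 * #|F| * #|F|)%N.
Proof.
have := leq_card state_tuple (can_inj state_tupleK).
by rewrite !card_prod !card_ffun !card_option !card_prod !card_ord.
Qed.

Definition init (r : F) : state :=
  State r None [ffun _ => 0] [ffun _ => 0] [ffun _ => 0] [ffun _ => 0] 0 ord0 ord0 0 0.

Definition help_fields (s : state) :=
  (chunk s, chunk_len s, ncoef s, horner_acc s, mid_coef s).

Definition enter (s : state) (u : 'I_n) : state :=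
  if current s == Some u then s else
  State (point s) (Some u) [ffun _ => 0] [ffun _ => 0] (edge_val s) (wedge_val s)
    (chunk s) (chunk_len s) (ncoef s) (horner_acc s) (mid_coef s).

(* [wedge_val] holds the [W_j] of the finished neighbour lists plus the product of the
   partial sums [nbr_a], [nbr_b] of the current one. *)
Definition add_nbr (s : state) (u w : 'I_n) : state :=
  let r := point s in
  let na := [ffun i => nbr_a s i + (mono_a w i).[r]] in
  let nb := [ffun i => nbr_b s i + (mono_b w i).[r]] in
  State r (current s) na nb
    [ffun j => edge_val s j + (mono_edge u w j).[r]]
    [ffun j => wedge_val s j + (na j.1 * nb j.2 - nbr_a s j.1 * nbr_b s j.2)]
    (chunk s) (chunk_len s) (ncoef s) (horner_acc s) (mid_coef s).

Definition stream_step (s : state) (t : token n) : state := add_nbr (enter s t.1) t.1 t.2.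

Lemma foldl_stream_current s u l : current s = Some u ->
  let s' := foldl stream_step s [seq (u, w) | w <- l] in
  [/\ current s' = Some u, point s' = point s, help_fields s' = help_fields s,
   (forall i, nbr_a s' i = nbr_a s i + \sum_(w <- l) (mono_a w i).[point s]) /\
   (forall i, nbr_b s' i = nbr_b s i + \sum_(w <- l) (mono_b w i).[point s]) &
   (forall j, edge_val s' j = edge_val s j + \sum_(w <- l) (mono_edge u w j).[point s]) /\
   (forall j, wedge_val s' j =
      wedge_val s j + (nbr_a s' j.1 * nbr_b s' j.2 - nbr_a s j.1 * nbr_b s j.2))].
Proof.
elim: l s => [|w l IH] s cur_s /=.
  by split=> //; split=> j; rewrite ?big_nil ?addr0 ?subrr ?addr0.
have -> : stream_step s (u, w) = add_nbr s u w by rewrite /stream_step /enter cur_s eqxx.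
have [cur' pt' hf' [na' nb'] [fv' gv']] := IH (add_nbr s u w) cur_s.
split=> //; try split => j.
- by rewrite na' big_cons /= ffunE addrA.
- by rewrite nb' big_cons /= ffunE addrA.
- by rewrite fv' big_cons /= ffunE addrA.
rewrite gv' /= !ffunE /= -addrA; congr (_ + _).
by rewrite addrC addrA subrK addrC.
Qed.

Lemma foldl_stream_block s u l : current s != Some u ->
  let s' := foldl stream_step s [seq (u, w) | w <- l] in
  [/\ point s' = point s, help_fields s' = help_fields s,
     current s' = Some u \/ current s' = current s,
     forall j, edge_val s' j = edge_val s j + \sum_(w <- l) (mono_edge u w j).[point s] &
     forall j, wedge_val s' j = wedge_val s j +
       (\sum_(w <- l) (mono_a w j.1).[point s]) * (\sum_(w <- l) (mono_b w j.2).[point s])].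
Proof.
case: l => [|w l] not_cur /=.
  by split; [| | right | move=> j; rewrite big_nil addr0 | move=> j; rewrite !big_nil mulr0 addr0].
have -> : stream_step s (u, w) = stream_step (enter s u) (u, w).
  by rewrite /stream_step /= /enter (negbTE not_cur) eqxx.
have cur_enter : current (enter s u) = Some u by rewrite /enter (negbTE not_cur).
have [cur' pt' hf' [na' nb'] [fv' gv']] := foldl_stream_current (w :: l) cur_enter.
rewrite /enter (negbTE not_cur) /= in cur' pt' hf' na' nb' fv' gv' *.
split=> [||| j | j]; [exact: pt' | exact: hf' | by left | by rewrite fv' |].
by rewrite gv' na' nb' !ffunE !add0r mulr0 subr0.
Qed.

Lemma foldl_stream_blocks (B : seq ('I_n * seq 'I_n)) s : uniq (map fst B) ->
  (forall u, u \in map fst B -> current s != Some u) ->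
  let s' := foldl stream_step s (flatten [seq [seq (bk.1, w) | w <- bk.2] | bk <- B]) in
  [/\ point s' = point s, help_fields s' = help_fields s,
    forall j, edge_val s' j =
      edge_val s j + \sum_(bk <- B) \sum_(w <- bk.2) (mono_edge bk.1 w j).[point s] &
    forall j, wedge_val s' j = wedge_val s j + \sum_(bk <- B)
      (\sum_(w <- bk.2) (mono_a w j.1).[point s]) * (\sum_(w <- bk.2) (mono_b w j.2).[point s])].
Proof.
elim: B s => [|[u l] B IH] s /=.
  by move=> _ _; split=> // j; rewrite big_nil addr0.
case/andP=> u_notin uniq_B not_cur; rewrite foldl_cat.
have [pt1 hf1 cur1 fv1 gv1] := foldl_stream_block l (not_cur u (mem_head _ _)).
set s1 := foldl stream_step s _ in pt1 hf1 cur1 fv1 gv1 *.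
have not_cur1 u' : u' \in map fst B -> current s1 != Some u'.
  move=> u'B; case: cur1 => ->; first by apply: contraNneq u_notin => -[->].
  by apply: not_cur; rewrite inE u'B orbT.
have [pt2 hf2 fv2 gv2] := IH s1 uniq_B not_cur1.
split; [by rewrite pt2 | by rewrite hf2 | move=> j | move=> j].
  by rewrite fv2 fv1 big_cons pt1 addrA.
by rewrite gv2 gv1 big_cons pt1 addrA.
Qed.

Lemma sum_adj_list (g : rel 'I_n) u (l : seq 'I_n) (f : 'I_n -> {poly F}) r : uniq l ->
  (forall w, (w \in l) = g u w) ->
  \sum_(w <- l) (f w).[r] = (\sum_w (if g u w then f w else 0)).[r].
Proof.
move=> uniq_l mem_l; rewrite horner_sum big_uniq // big_mkcond.
by apply: eq_bigr => w _; rewrite mem_l; case: (g u w); rewrite ?horner0.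
Qed.

Lemma sum_adj_blocks (B : seq ('I_n * seq 'I_n)) (G : 'I_n -> F) :
  perm_eq (map fst B) (enum 'I_n) -> \sum_(bk <- B) G bk.1 = \sum_u G u.
Proof.
by move=> perm_B; rewrite -(big_map fst xpredT G) (perm_big _ perm_B) big_enum.
Qed.

Lemma foldl_stream_adj g sigma r : adj_stream g sigma ->
  let s := foldl stream_step (init r) sigma in
  [/\ point s = r, help_fields s = help_fields (init r),
     forall j, edge_val s j = (edge_poly g j).[r] & forall j, wedge_val s j = (wedge_poly g j).[r]].
Proof.
case=> B [perm_B adj_B ->].
have uniq_B : uniq (map fst B) by rewrite (perm_uniq perm_B) enum_uniq.
have [pt hf fv gv] := foldl_stream_blocks (s := init r) uniq_B (fun _ _ => isT).
split=> // j; rewrite ?fv ?gv /= ffunE add0r.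
  rewrite /edge_poly horner_sum -(sum_adj_blocks _ perm_B).
  by apply: eq_big_seq => bk /adj_B[uniq_l mem_l]; rewrite (sum_adj_list _ _ uniq_l mem_l).
rewrite /wedge_poly horner_sum -(sum_adj_blocks _ perm_B).
by apply: eq_big_seq => bk /adj_B[uniq_l mem_l]; rewrite hornerM !(sum_adj_list _ _ uniq_l mem_l).
Qed.


(* Coefficients arrive highest degree first, as [L]-bit chunks, so chunk number [span] is the
   coefficient of [X^(span-1)]; [ncoef] saturates at [ncoefs.+1] to keep the state finite. *)
Definition help_step (s : state) (bt : bool) : state :=
  let c := chunk s * 2%:R + (bt : nat)%:R in
  if ((chunk_len s).+1 == L)%N then
    State (point s) (current s) (nbr_a s) (nbr_b s) (edge_val s) (wedge_val s) 0 ord0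
      (inord (minn (ncoef s).+1 ncoefs.+1)) (horner_acc s * point s + c)
      (if ncoef s == span :> nat then c else mid_coef s)
  else State (point s) (current s) (nbr_a s) (nbr_b s) (edge_val s) (wedge_val s) c
      (inord (chunk_len s).+1) (ncoef s) (horner_acc s) (mid_coef s).

Definition output (s : state) : option nat :=
  if [&& chunk_len s == 0 :> nat, ncoef s == ncoefs :> nat
       & horner_acc s == \sum_j edge_val s j * wedge_val s j]
  then Some (mid_coef s %/ 6)%N else None.

Definition outcome (r : F) (sigma : seq (token n)) (help : seq bool) : option nat :=
  output (foldl help_step (foldl stream_step (init r) sigma) help).

Record decoder := Decoder {
  pending : F; npending : nat; nreceived : nat; received : {poly F}; saved : F }.

Definition decoder0 : decoder := Decoder 0 0 0 0 0.

Definition decode_step (y : decoder) (bt : bool) : decoder :=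
  let c := pending y * 2%:R + (bt : nat)%:R in
  if ((npending y).+1 == L)%N then
    Decoder 0 0 (nreceived y).+1 (cons_poly c (received y))
      (if nreceived y == span then c else saved y)
  else Decoder c (npending y).+1 (nreceived y) (received y) (saved y).

Definition decoder_inv (y : decoder) :=
  [/\ (npending y < L)%N, (size (received y) <= nreceived y)%N &
      (span < nreceived y)%N -> saved y = (received y)`_(nreceived y - 1 - span)].

Definition simulates (s : state) (y : decoder) :=
  [/\ chunk s = pending y, chunk_len s = npending y :> nat,
      ncoef s = minn (nreceived y) ncoefs.+1 :> nat,
      horner_acc s = (received y).[point s] & mid_coef s = saved y].

Lemma help_step_simulates s y bt : decoder_inv y -> simulates s y ->
  [/\ decoder_inv (decode_step y bt), simulates (help_step s bt) (decode_step y bt),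
      point (help_step s bt) = point s, edge_val (help_step s bt) = edge_val s
    & wedge_val (help_step s bt) = wedge_val s].
Proof.
case=> lt_np size_rec saved_rec [e_chunk e_len e_ncoef e_acc e_mid].
have le_span : (span <= ncoefs)%N by rewrite /ncoefs; lia.
rewrite /help_step /decode_step e_len e_chunk; case: ifP => /eqP eq_L; split=> //.
- split=> /=; first by [].
    by rewrite size_cons_poly; case: ifP; rewrite // ltnS.
  move=> lt_span; case: eqP => [-> | /eqP neq_span]; first by rewrite subSS subn0 subnn coef_cons.
  rewrite coef_cons ifF; last by move: lt_span neq_span; lia.
  rewrite saved_rec; last by move: lt_span neq_span; lia.
  by congr (_`_ _); move: lt_span neq_span; lia.
- split=> //=; first by rewrite inordK e_ncoef; lia.
    by rewrite e_acc horner_cons.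
  rewrite e_ncoef (_ : (minn _ _ == span) = (nreceived y == span)) ?e_mid //.
  by apply/eqP/eqP; lia.
- by split=> //=; lia.
- by split=> //=; rewrite inordK //; lia.
Qed.

Lemma foldl_help_step help s y : decoder_inv y -> simulates s y ->
  let s' := foldl help_step s help in let y' := foldl decode_step y help in
  [/\ decoder_inv y', simulates s' y', point s' = point s,
      edge_val s' = edge_val s & wedge_val s' = wedge_val s].
Proof.
elim: help s y => [|bt help IH] s y inv_y sim_sy //=.
have [inv' sim' pt' fv' gv'] := help_step_simulates bt inv_y sim_sy.
by have [? ? -> -> ->] := IH _ _ inv' sim'.
Qed.

Lemma outcomeE g sigma r help : adj_stream g sigma ->
  let y := foldl decode_step decoder0 help in
  decoder_inv y /\ outcome r sigma help =
  if [&& npending y == 0%N, nreceived y == ncoefs & (received y).[r] == (tri_poly g).[r]]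
  then Some (saved y %/ 6)%N else None.
Proof.
move=> /(foldl_stream_adj r) [pt hf fv gv] /=.
set s := foldl stream_step (init r) sigma in pt hf fv gv *.
have sim0 : simulates s decoder0.
  by rewrite /simulates; move: hf; rewrite /help_fields /= => -[-> -> -> -> ->]; rewrite horner0.
have inv0 : decoder_inv decoder0 by split; rewrite //= size_poly0.
have [inv' [_ e_len e_ncoef e_acc e_mid] pt' fv' gv'] := foldl_help_step help inv0 sim0.
split=> //; rewrite /outcome /output e_len e_ncoef e_acc e_mid pt' fv' gv' pt /tri_poly horner_sum.
under eq_bigr => j _ do rewrite fv gv -hornerM.
by congr (if _ then _ else _); congr (_ && (_ && _)); apply/eqP/eqP; lia.
Qed.

Lemma saved_tri_poly g y : prime p -> simple_graph g -> (6 * triangle_count g < p)%N ->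
  decoder_inv y -> nreceived y = ncoefs -> received y = tri_poly g ->
  (nat_of_ord (saved y) %/ 6)%N = triangle_count g.
Proof.
move=> p_pr g_simple lt_p [_ _ saved_rec] n_rec rec_tri.
have span_pos := span_gt0.
rewrite saved_rec n_rec ?rec_tri /ncoefs; last by lia.
have -> : (2 * span - 1 - span = span.-1)%N by lia.
exact: tri_poly_mid_div6.
Qed.

Lemma foldl_decode_partial bs k q sv : (size bs < L)%N ->
  foldl decode_step (Decoder 0 0 k q sv) bs = Decoder (bits_val F bs) (size bs) k q sv.
Proof.
elim/last_ind: bs => [|bs bt IH] //=; rewrite size_rcons => lt_bs.
rewrite foldl_rcons IH; last by lia.
by rewrite /decode_step /= ifF; [rewrite /bits_val foldl_rcons | apply/negbTE; lia].
Qed.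

Lemma foldl_decode_chunk m k q sv : (m < 2 ^ L)%N ->
  foldl decode_step (Decoder 0 0 k q sv) (bits_be L m) =
  Decoder 0 0 k.+1 (cons_poly m%:R q) (if k == span then m%:R else sv).
Proof.
move=> lt_m; rewrite -(bits_val_be F lt_m) [bits_be _ _]/= foldl_rcons.
by rewrite foldl_decode_partial ?size_bits_be // /decode_step /= eqxx /bits_val foldl_rcons.
Qed.

Definition help_of_coefs (cs : seq F) : seq bool := flatten [seq bits_be L (val c) | c <- cs].

Lemma foldl_decode_coefs (cs : seq F) k q sv : prime p -> (p <= 2 ^ L)%N ->
  exists sv', foldl decode_step (Decoder 0 0 k q sv) (help_of_coefs cs) =
    Decoder 0 0 (k + size cs)%N (foldl (fun q c => cons_poly c q) q cs) sv'.
Proof.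
move=> p_pr le_p; elim: cs k q sv => [|c cs IH] k q sv /=; first by exists sv; rewrite addn0.
have lt_c : (c < 2 ^ L)%N by apply: leq_trans (ltn_ord c) _; rewrite Fp_cast.
rewrite foldl_cat foldl_decode_chunk // natr_Zp.
have [sv' ->] := IH k.+1 (cons_poly c q) (if k == span then c else sv).
by exists sv'; rewrite addSnnS.
Qed.

Lemma size_help_of_coefs cs : size (help_of_coefs cs) = (size cs * L)%N.
Proof.
elim: cs => // c cs IH; rewrite /help_of_coefs map_cons.
by rewrite (_ : flatten _ = bits_be L c ++ help_of_coefs cs) // size_cat size_bits_be IH mulSn.
Qed.

Definition graph_of (sigma : seq (token n)) : rel 'I_n := fun u w => (u, w) \in sigma.

Lemma graph_of_adj_stream g sigma : adj_stream g sigma -> graph_of sigma = g.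
Proof.
case=> B [perm_B adj_B ->]; apply: functional_extensionality => u.
apply: functional_extensionality => w; apply/idP/idP.
  case/flattenP => _ /mapP[bk bk_in ->] /mapP[w' w'_in [-> ->]].
  by have [_ <-] := adj_B bk bk_in.
move=> guw; have : u \in map fst B by rewrite (perm_mem perm_B) mem_enum.
case/mapP => bk bk_in eq_u; apply/flattenP; exists [seq (bk.1, w0) | w0 <- bk.2].
  by apply/mapP; exists bk.
apply/mapP; exists w; last by rewrite eq_u.
by have [_ ->] := adj_B bk bk_in; rewrite -eq_u.
Qed.

Definition honest_help (sigma : seq (token n)) : seq bool :=
  help_of_coefs (rev (mkseq (fun i => (tri_poly (graph_of sigma))`_i) ncoefs)).

Lemma size_honest_help sigma : size (honest_help sigma) = (ncoefs * L)%N.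
Proof. by rewrite size_help_of_coefs size_rev size_mkseq. Qed.

Lemma outcome_honest g sigma r : prime p -> (p <= 2 ^ L)%N -> simple_graph g ->
  adj_stream g sigma -> (6 * triangle_count g < p)%N ->
  outcome r sigma (honest_help sigma) = Some (triangle_count g).
Proof.
move=> p_pr le_p g_simple adj lt_p; have [inv ->] := outcomeE r (honest_help sigma) adj.
rewrite /honest_help (graph_of_adj_stream adj) in inv *.
set cs := rev _ in inv *.
have [sv e_dec] := foldl_decode_coefs cs 0 0 0 p_pr le_p.
have rec_tri : foldl (fun q c => cons_poly c q) 0 cs = tri_poly g.
  rewrite foldl_rev -polyC0 -/(Poly _); apply/polyP => i; rewrite coef_Poly.
  case: (ltnP i ncoefs) => [lt_i | le_i]; first by rewrite nth_mkseq.
  by rewrite nth_default ?size_mkseq // coef_tri_poly_high.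
have n_rec : (0 + size cs)%N = ncoefs by rewrite size_rev size_mkseq.
rewrite /decoder0 e_dec n_rec rec_tri in inv *; rewrite /= !eqxx /=.
by rewrite (saved_tri_poly p_pr g_simple lt_p inv).
Qed.

Lemma outcome_sound g sigma help : prime p -> simple_graph g -> adj_stream g sigma ->
  (6 * triangle_count g < p)%N ->
  exists2 B : {set F}, (#|B| < ncoefs)%N & forall r,
    outcome r sigma help != None -> outcome r sigma help != Some (triangle_count g) -> r \in B.
Proof.
move=> p_pr g_simple adj lt_p; set y := foldl decode_step decoder0 help.
have [inv _] := outcomeE 0 help adj; rewrite -/y in inv.
have span_pos := span_gt0.
case: (boolP ((nreceived y == ncoefs) && (received y != tri_poly g))) => [|good].
  case/andP=> /eqP n_rec neq.
  have nz : received y - tri_poly g != 0 by rewrite subr_eq0.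
  exists [set r | root (received y - tri_poly g) r].
    rewrite cardE; apply: leq_trans (max_poly_roots nz _ (enum_uniq _)) _.
      by apply/allP => r; rewrite mem_enum inE.
    apply: leq_trans (size_add _ _) _; rewrite size_opp geq_max size_tri_poly andbT.
    by case: inv => _ + _; rewrite n_rec.
  move=> r; have [_ ->] := outcomeE r help adj; rewrite -/y.
  case: ifP => // /and3P[_ _ /eqP e] _ _.
  by rewrite inE /root hornerD hornerN e subrr.
exists set0 => [|r]; first by rewrite cards0 /ncoefs; lia.
have [_ ->] := outcomeE r help adj; rewrite -/y.
case: ifP => // /and3P[_ /eqP n_rec _] _.
move: good; rewrite n_rec eqxx /= negbK => /eqP rec_tri.
by rewrite (saved_tri_poly p_pr g_simple lt_p inv n_rec rec_tri) eqxx.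
Qed.

Lemma card_state_le k : prime p -> (p <= 2 ^ L)%N -> (ncoefs.+2 <= 2 ^ L)%N -> (n < 2 ^ k)%N ->
  (#|{: state}| <= 2 ^ (L * (2 * (a * b) + a + b + 6) + k))%N.
Proof.
move=> p_pr le_p le_coefs lt_n; rewrite -(card_Fp p_pr) in le_p.
apply: leq_trans card_state _; set Y := (2 ^ L)%N.
have le_L : (L <= Y)%N by apply/ltnW/ltn_expl.
apply: (@leq_trans (Y * 2 ^ k * Y ^ a * Y ^ b * Y ^ (a * b) * Y ^ (a * b) * Y * Y * Y * Y * Y)).
  by repeat apply: leq_mul => //; rewrite leq_exp2r.
by rewrite /Y -!expnM -!expnD leq_exp2l //; lia.
Qed.

Definition tc_verifier bits (card_S : (#|{: state}| <= 2 ^ bits)%N) : verifier n :=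
  state_verifier (init 0) card_S (fun x => init (val x)%:R) stream_step help_step output.

Lemma tc_verifier_scheme bits (card_S : (#|{: state}| <= 2 ^ bits)%N) :
  prime p -> (n ^ 3 < p)%N -> (6 * ncoefs <= p)%N -> (p <= 2 ^ L)%N -> (p <= 2 ^ bits)%N ->
  tc_scheme (tc_verifier card_S) honest_help.
Proof.
move=> p_pr lt_p le_coefs le_pL le_pbits.
have tri_lt (g : rel 'I_n) : simple_graph g -> (6 * triangle_count g < p)%N.
  by move=> g_simple; apply: leq_ltn_trans (triangle_count_le g_simple) lt_p.
split=> g sigma g_simple adj => [r | help].
  by rewrite run_state_verifier; apply: outcome_honest => //; apply: tri_lt.
have [B card_B bad_B] := outcome_sound help p_pr g_simple adj (tri_lt g g_simple).
have bad_sub : [set r : 'I_(2 ^ bits) | (run (tc_verifier card_S) r sigma help != None) &&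
    (run (tc_verifier card_S) r sigma help != Some (triangle_count g))]
    \subset [set x : 'I_(2 ^ bits) | ((val x)%:R : F) \in B].
  by apply/subsetP => x; rewrite !inE !run_state_verifier => /andP[]; apply: bad_B.
have le_bad := leq_trans (subset_leq_card bad_sub) (card_seeds_mod _ B p_pr).
have := leq_trunc_div (2 ^ bits) p; move: le_bad card_B le_coefs le_pbits => /=.
(* [3 |B| (2^bits/p + 1) <= 2^bits] as [6 |B| < p <= 2^bits] *)
nia.
Qed.

End TriangleScheme.

Local Close Scope ring_scope.

Lemma tc_scheme_params n a' b' p L' : prime p -> (12 * n.+1 ^ 3 < p) -> p <= 2 ^ L'.+1 ->
  exists (V : verifier n) (P : seq (token n) -> seq bool),
    [/\ tc_scheme V P, vbits V = L'.+1 * (2 * (a'.+1 * b'.+1) + a'.+1 + b'.+1 + 6) + logf n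
      & forall sigma, size (P sigma) = ncoefs n a' b' * L'.+1].
Proof.
move=> p_pr lt_p le_p.
have le_coefs : 6 * ncoefs n a' b' <= p.
  have := span_le_sq n a' b'; rewrite /ncoefs.
  have : n.+1 ^ 2 <= n.+1 ^ 3 by rewrite leq_pexp2l.
  lia.
have lt_ncoefs : (ncoefs n a' b').+2 <= p.
  by have := span_gt0 n a' b'; rewrite /ncoefs in le_coefs *; lia.
have lt_n : n < 2 ^ logf n by apply: trunc_log_ltn.
have card_S := card_state_le p_pr le_p (leq_trans lt_ncoefs le_p) lt_n.
exists (tc_verifier card_S), (honest_help a' b' p L'); split=> //; last exact: size_honest_help.
apply: tc_verifier_scheme => //.
  have : n ^ 3 <= n.+1 ^ 3 by rewrite leq_exp2r.
  lia.
by apply: leq_trans le_p _; rewrite leq_exp2l //; nia.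
Qed.

Lemma block_sizes n h v : 0 < n -> n ^ 2 <= h * v ->
  exists a' b', a'.+1 * b'.+1 <= v /\ (n %/ a'.+1 + 1) * (n %/ b'.+1 + 1) <= 4 * h.
Proof.
move=> n_gt0; rewrite -mulnn => le_nhv.
have v_gt0 : 0 < v by case: v le_nhv; rewrite ?muln0; nia.
have h_gt0 : 0 < h by case: h le_nhv; rewrite ?mul0n; nia.
case: (leqP v n) => [le_vn | lt_nv].
  exists v.-1, 0; rewrite prednK // muln1 divn1; split=> //.
  have q_gt0 : 0 < n %/ v by rewrite divn_gt0.
  have : n %/ v * n <= h.
    rewrite -(leq_pmul2r v_gt0); apply: leq_trans le_nhv.
    by rewrite mulnAC leq_mul2r leq_trunc_div orbT.
  nia.
case: (leqP n (v %/ n)) => [le_n | lt_n].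
  exists n.-1, n.-1; rewrite prednK // divnn n_gt0; split.
    by apply: leq_trans (leq_trunc_div v n); rewrite leq_mul2r le_n orbT.
  lia.
set q := v %/ n; have q_gt0 : 0 < q by rewrite divn_gt0 // ltnW.
exists n.-1, q.-1; rewrite !prednK // divnn n_gt0; split; first by rewrite mulnC leq_trunc_div.
have lt_v : v < q.+1 * n by rewrite /q ltn_ceil.
have : n < h * q.+1.
  by rewrite -(ltn_pmul2r n_gt0); apply: leq_ltn_trans le_nhv _; rewrite -mulnA ltn_pmul2l.
have := leq_trunc_div n q; nia.
Qed.

Lemma prime_cube_bound n : exists2 p, prime p & 12 * n.+1 ^ 3 < p <= 2 ^ (28 * logf n).
Proof.
set l := logf n; have lt_n : n < 2 ^ l by apply: trunc_log_ltn.
have [|p p_pr /andP[lo hi]] := @prime_between_exp2 (3 * l + 4); first lia.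
exists p => //; apply/andP; split.
  apply: leq_trans lo; rewrite expnD (mulnC 3 l) expnM.
  have : n.+1 ^ 3 <= (2 ^ l) ^ 3 by rewrite leq_exp2r.
  have : 0 < n.+1 ^ 3 by rewrite expn_gt0.
  lia.
apply: leq_trans hi _; rewrite leq_exp2l //; rewrite /l /logf; lia.
Qed.

Lemma tc_scheme_no_vertex : exists (V : verifier 0) (P : seq (token 0) -> seq bool),
  [/\ tc_scheme V P, vbits V = 0 & forall sigma, size (P sigma) = 0].
Proof.
have no_triangle (g : rel 'I_0) : triangle_count g = 0.
  apply/eqP; rewrite cards_eq0; apply/eqP/setP => t; rewrite !inE.
  by have := max_card (mem t); rewrite card_ord leqn0 => /eqP ->.
exists (@Verifier 0 0 id (fun x _ => x) (fun x _ => x) (fun _ => Some 0)), (fun _ => [::]).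
split=> //; split=> g sigma _ _ => [r | help]; first by rewrite /run no_triangle.
rewrite (_ : [set r | _] = set0) ?cards0 //.
by apply/setP => r; rewrite !inE /run no_triangle eqxx andbF.
Qed.

Theorem theorem4p6 :
  exists C k : nat, forall n h v : nat, n ^ 2 <= h * v ->
    exists (V : verifier n) (P : seq (token n) -> seq bool),
      [/\ tc_scheme V P,
          vbits V <= C * v * logf n ^ k
        & forall g sigma, simple_graph g -> adj_stream g sigma ->
            size (P sigma) <= C * h * logf n ^ k].
Proof.
exists 300, 1 => n h v le_nhv; rewrite expn1.
have [n0 | n_gt0] := posnP n.
  subst n; have [V [P [scheme e_bits size_P]]] := tc_scheme_no_vertex.
  by exists V, P; rewrite e_bits; split=> // g sigma _ _; rewrite size_P.
have [a' [b' [le_ab le_span]]] := block_sizes n_gt0 le_nhv.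
have [p p_pr /andP[lt_p le_p]] := prime_cube_bound n.
set L' := (28 * logf n).-1; have eL : L'.+1 = 28 * logf n by rewrite prednK.
rewrite -eL in le_p; have [V [P [scheme e_bits size_P]]] := tc_scheme_params a' b' p_pr lt_p le_p.
exists V, P; split=> // [|g sigma _ _]; rewrite ?e_bits ?size_P eL.
  have le_a := leq_pmulr b'.+1 (ltn0Sn a'); have le_b := leq_pmull a'.+1 (ltn0Sn b').
  have : 2 * (a'.+1 * b'.+1) + a'.+1 + b'.+1 + 6 <= 10 * v by lia.
  move: (logf n) => l le_state; clear -le_state; nia.
move: le_span; rewrite /ncoefs /span /nquo_b; move: (logf n) => l; clear; nia.
Qed.
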